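(* In the comparison model (where letters can be accessed only through comparisons), every algorithm solving the witness s-cover testing problem requires $\Omega(n\log n)$ comparisons in the worst case on inputs where $S$ has length $n$.
   Context: For words $C,S$, $C$ is an \emph{s-cover} of $S$ if for every position $i$ of $S$ there exist indices $j_0<\dots<j_{|C|-1}$ with $S[j_t]=C[t]$ for all $t$ and $i\in\{j_0,\dots,j_{|C|-1}\}$. The \emph{witness s-cover testing problem}: given words $C$ and $S$, decide whether $C$ is an s-cover of $S$, and if so, output for every position $i$ of $S$ a position $j$ of $C$ such that some occurrence $j_0<\dots<j_{|C|-1}$ of $C$ as a subsequence of $S$ has $j_j=i$ (any such $j$ may be output). *)

From mathcomp Require Import all_boot.
Set Implicit Arguments. Unset Strict Implicit. Unset Printing Implicit Defensive.

(* Words are sequences of letters; the alphabet is (ordered) nat.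
   Positions are 0-based. *)

Definition occurrence (C S js : seq nat) : Prop :=
  [/\ size js = size C,
      sorted ltn js,
      all (fun j => j < size S) js &
      forall t, t < size C -> nth 0 S (nth 0 js t) = nth 0 C t].

Definition s_cover (C S : seq nat) : Prop :=
  forall i, i < size S -> exists js, occurrence C S js /\ i \in js.

Definition valid_witness (C S W : seq nat) : Prop :=
  size W = size S /\
  forall i, i < size S ->
    nth 0 W i < size C /\
    exists js, occurrence C S js /\ nth 0 js (nth 0 W i) = i.

(* Comparison model: a ternary comparison decision tree over an input of
   k letters (the word C ++ S).  A leaf outputs the answer:
   None = "not an s-cover", Some W = "s-cover, with witness W". *)
Inductive dtree (k : nat) : Type :=
| Leaf of option (seq nat)
| Node of 'I_k & 'I_k & dtree k & dtree k & dtree k.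

Fixpoint eval_dtree (k : nat) (T : dtree k) (w : seq nat) : option (seq nat) :=
  match T with
  | Leaf o => o
  | Node i j Tlt Teq Tgt =>
      let a := nth 0 w i in
      let b := nth 0 w j in
      if a < b then eval_dtree Tlt w
      else if a == b then eval_dtree Teq w
      else eval_dtree Tgt w
  end.

Fixpoint depth (k : nat) (T : dtree k) : nat :=
  match T with
  | Leaf _ => 0
  | Node _ _ T1 T2 T3 => (maxn (depth T1) (maxn (depth T2) (depth T3))).+1
  end.

Definition solves_witness_scover (m n : nat) (T : dtree (m + n)) : Prop :=
  forall C S : seq nat, size C = m -> size S = n ->
    match eval_dtree T (C ++ S) with
    | None => ~ s_cover C S
    | Some W => s_cover C S /\ valid_witness C S W
    end.

(** A comparison tree of depth d has at most 3^d leaves, so it produces at most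
    3^d distinct outputs.  Take the pattern C = 0 1 ... k-1 with k about n/4 and
    the texts S = C M C, where M ranges over the k^(n-2k) words of length n-2k
    over the letters of C.  Each such S is s-covered by C, and since the letters
    of C are distinct the only valid witness is S itself.  Hence the tree must
    have k^(n-2k) distinct outputs, i.e. (n-2k) log k <= d log 3, which is
    Omega(n log n). *)

From mathcomp Require Import all_boot.
From mathcomp Require Import zify.
Set Implicit Arguments. Unset Strict Implicit. Unset Printing Implicit Defensive.

Fixpoint leaves (K : nat) (T : dtree K) : seq (option (seq nat)) :=
  match T with
  | Leaf o => [:: o]
  | Node _ _ T1 T2 T3 => leaves T1 ++ leaves T2 ++ leaves T3
  end.

Lemma size_leaves K (T : dtree K) : size (leaves T) <= 3 ^ depth T.
Proof.
elim: T => [//|i j T1 IH1 T2 IH2 T3 IH3] /=.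
rewrite !size_cat expnS mulSn mul2n -addnn.
set d := maxn _ _.
have le_exp (T : dtree K) : depth T <= d -> 3 ^ depth T <= 3 ^ d.
  by move=> le_Td; rewrite leq_exp2l.
by rewrite !leq_add ?(leq_trans IH1, leq_trans IH2, leq_trans IH3) ?le_exp //;
   rewrite /d; lia.
Qed.

Lemma eval_dtree_in_leaves K (T : dtree K) w : eval_dtree T w \in leaves T.
Proof.
elim: T => [o|i j T1 IH1 T2 IH2 T3 IH3] /=; first exact: mem_head.
by rewrite !mem_cat; do 2?case: ifP => _; rewrite ?IH1 ?IH2 ?IH3 ?orbT.
Qed.

Lemma card_le_exp_depth K (T : dtree K) (I : finType) (input : I -> seq nat) :
  injective (fun x => eval_dtree T (input x)) -> #|I| <= 3 ^ depth T.
Proof.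
move=> inj_out; apply: leq_trans (size_leaves T).
rewrite cardE -(size_map (fun x => eval_dtree T (input x))).
apply: uniq_leq_size; first by rewrite map_inj_uniq ?enum_uniq.
by move=> o /mapP [x _ ->]; apply: eval_dtree_in_leaves.
Qed.

(* The pattern 0 1 ... k-1 has pairwise distinct letters, so an occurrence
   matches its t-th letter exactly to a letter t of the text. *)
Lemma valid_witness_iotaE k S W : valid_witness (iota 0 k) S W -> W = S.
Proof.
move=> [size_W wW]; apply: (eq_from_nth (x0 := 0)) => // i; rewrite size_W => lt_iS.
have [lt_Wk [js [[_ _ _ occ_js] js_Wi]]] := wW i lt_iS.
move: (occ_js _ lt_Wk); rewrite js_Wi; move: lt_Wk; rewrite size_iota => lt_Wk.
by rewrite nth_iota.
Qed.

Section HardTexts.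

Variables (k : nat) (M : seq nat).
Definition hard_text := iota 0 k ++ M ++ iota 0 k.
Let L := size M.

Lemma size_hard_text : size hard_text = 2 * k + L.
Proof. rewrite /hard_text !size_cat !size_iota; lia. Qed.

Lemma nth_hard_text_prefix t : t < k -> nth 0 hard_text t = t.
Proof. by move=> lt_tk; rewrite nth_cat size_iota lt_tk nth_iota. Qed.

Lemma nth_hard_text_suffix t : t < k -> nth 0 hard_text (k + L + t) = t.
Proof.
move=> lt_tk; rewrite nth_cat size_iota ifF; last lia.
rewrite nth_cat ifF -/L; last lia.
rewrite nth_iota; lia.
Qed.

Lemma nth_hard_text_middle j : j < L -> nth 0 hard_text (k + j) = nth 0 M j.
Proof.
move=> lt_jL; rewrite nth_cat size_iota ifF; last lia.
by rewrite nth_cat -/L ifT; [congr nth|]; lia.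
Qed.

Lemma hard_text_middle : take L (drop k hard_text) = M.
Proof. by rewrite drop_size_cat ?size_iota // take_size_cat. Qed.

Hypothesis M_small : all (fun x => x < k) M.

(* Every letter v at position i is preceded by 0 ... v-1 (in the prefix) and
   followed by v+1 ... k-1 (in the suffix). *)
Lemma nth_hard_text_bounds i : i < size hard_text ->
  let v := nth 0 hard_text i in [/\ v < k, v <= i & i <= k + L + v].
Proof.
rewrite size_hard_text => lt_i /=.
case: (ltnP i k) => [lt_ik|le_ki]; first by rewrite nth_hard_text_prefix //; split; lia.
case: (ltnP i (k + L)) => [lt_iL|le_Li].
  rewrite -(subnKC le_ki) nth_hard_text_middle; last lia.
  have : nth 0 M (i - k) < k by apply: (allP M_small); rewrite mem_nth // -/L; lia.
  by split=> //; lia.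
have -> : i = k + L + (i - k - L) by lia.
by rewrite nth_hard_text_suffix; [split|]; lia.
Qed.

Lemma hard_text_cover : s_cover (iota 0 k) hard_text.
Proof.
move=> i lt_i; have [lt_vk le_vi le_iv] := nth_hard_text_bounds lt_i.
set v := nth 0 hard_text i in lt_vk le_vi le_iv.
pose pos t := if t < v then t else if t == v then i else k + L + t.
exists (map pos (iota 0 k)); split; last first.
  by apply/mapP; exists v; rewrite ?mem_iota // /pos ltnn eqxx.
split.
- by rewrite size_map !size_iota.
- apply: homo_sorted; last exact: iota_ltn_sorted.
  by move=> x y /= lt_xy; rewrite /pos; do 4?case: ifP => /=; lia.
- apply/allP => p /mapP [t]; rewrite mem_iota size_hard_text /pos => lt_t ->.
  by do 2?case: ifP => /=; lia.
- move=> t; rewrite size_iota => lt_tk.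
  rewrite (nth_map 0) ?size_iota // nth_iota // add0n /pos.
  case: ifP => _; first exact: nth_hard_text_prefix.
  by case: eqP => [->|_]; last exact: nth_hard_text_suffix.
Qed.

End HardTexts.

Lemma solver_exp_le_depth k n (T : dtree (k + n)) :
  2 * k <= n -> solves_witness_scover T -> k ^ (n - 2 * k) <= 3 ^ depth T.
Proof.
move=> le_2kn solves_T; set L := n - 2 * k.
pose text (x : L.-tuple 'I_k) := hard_text k (map val x).
have out_text (x : L.-tuple 'I_k) : eval_dtree T (iota 0 k ++ text x) = Some (text x).
  have size_text : size (text x) = n.
    by rewrite /text size_hard_text size_map size_tuple /L; lia.
  move: (solves_T (iota 0 k) (text x) (size_iota _ _) size_text).
  case: eval_dtree => [W [_ /valid_witness_iotaE -> //]|not_cover].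
  case: not_cover; apply: hard_text_cover.
  by apply/allP => _ /mapP [y _ ->]; apply: ltn_ord.
rewrite -[k in k ^ L]card_ord -card_tuple.
apply: (card_le_exp_depth (input := fun x => iota 0 k ++ text x)).
move=> x y; rewrite /= !out_text => -[eq_text].
apply/val_inj/(inj_map val_inj).
rewrite -(hard_text_middle k (map val x)) -(hard_text_middle k (map val y)).
by rewrite !size_map !size_tuple -/(text x) -/(text y) eq_text.
Qed.

Lemma exp2_le_exp3_double a d : 2 ^ a <= 3 ^ d -> a <= 2 * d.
Proof.
move=> le_ad; rewrite -(leq_exp2l _ _ (erefl : 1 < 2)) (leq_trans le_ad) //.
by rewrite expnM; case: d {le_ad} => // d; rewrite leq_exp2r.
Qed.

Theorem mainTheorem14 :
  exists c N : nat, 0 < c /\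
    forall n : nat, N <= n ->
    forall A : forall m : nat, dtree (m + n),
      (forall m : nat, solves_witness_scover (A m)) ->
      exists m : nat, n * trunc_log 2 n <= c * depth (A m).
Proof.
exists 8, 16; split=> // n le16n A solves_A.
set t := trunc_log 2 n.
have le4t : 4 <= t by rewrite /t -(trunc_expnK 4 (erefl : 1 < 2)) leq_trunc_log.
have le_tn : 2 ^ t <= n by apply: trunc_logP; lia.
set k := 2 ^ (t - 2); exists k.
have le_4k : 4 * k <= n by rewrite /k (_ : 4 = 2 ^ 2) // -expnD subnKC //; lia.
have le_2k : 2 * k <= n by lia.
have := solver_exp_le_depth le_2k (solves_A k).
rewrite {1}/k -expnM => /exp2_le_exp3_double; nia.
Qed.
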